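(* For every integer $n\ge1$, \[ \sum_{\substack{m+k=n\\ m\ge1,\ k\ge0}}q_\psi(m)\,\Omega_m(k)=\begin{cases}-\omega(n)&\text{if } n \text{ is odd},\\ -\omega(n)+\omega(n/2)&\text{if } n\text{ is even}.\end{cases} \]
   Context: $q_\psi(n)$ is the number of partitions of $n$ into distinct parts whose parts have greatest common divisor $1$. $\omega:\mathbb{Z}\to\mathbb{Z}$ is defined by $\omega(0)=1$; $\omega(m)=(-1)^j$ if $m=\frac{3j^2\pm j}{2}$ for some integer $j\ge1$; $\omega(m)=0$ otherwise (in particular for $m<0$). For $m\ge1$ and integer $k$, $\Omega_m(k)=\sum_{j\ge0}\omega(k-jm)=\omega(k)+\omega(k-m)+\omega(k-2m)+\cdots$. *)

From mathcomp Require Import all_boot all_order all_algebra.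
Set Implicit Arguments. Unset Strict Implicit. Unset Printing Implicit Defensive.
Import Order.TTheory GRing.Theory Num.Theory.

(* A partition of n into distinct parts is a finite set of positive integers
   summing to n; parts are at most n, so we represent it as a set of elements of
   'I_(n.+1) not containing 0. *)
Definition is_distinct_partition (n : nat) (S : {set 'I_n.+1}) : bool :=
  (ord0 \notin S) && (\sum_(i in S) (i : nat) == n)%N.

Definition parts_gcd (n : nat) (S : {set 'I_n.+1}) : nat :=
  \big[gcdn/0%N]_(i in S) (i : nat).

Definition q_psi (n : nat) : nat :=
  #|[set S : {set 'I_n.+1} | is_distinct_partition S && (parts_gcd S == 1%N)]|.

Local Open Scope ring_scope.

(* m (a natural number) is (3j^2 + j)/2 resp. (3j^2 - j)/2 for some j >= 1 with j even/odd.
   Since (3j^2 - j)/2 >= j, it suffices to search j <= m. *)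
Definition pent_plus (m j : nat) : bool := (2 * m == 3 * j ^ 2 + j)%N.
Definition pent_minus (m j : nat) : bool := (2 * m + j == 3 * j ^ 2)%N.

Definition omega (z : int) : int :=
  match z with
  | Posz 0 => 1
  | Posz m =>
      if [exists j : 'I_m.+1, (0 < j)%N && (pent_plus m j || pent_minus m j)]
      then (if [exists j : 'I_m.+1, (0 < j)%N && ~~ odd j && (pent_plus m j || pent_minus m j)]
            then 1 else -1)
      else 0
  | Negz _ => 0
  end.

(* Omega_m(k) = sum_{j>=0} omega(k - j m); for k >= 0 and m >= 1 all terms with
   j > k vanish (negative argument), so the sum is truncated to j <= k. *)
Definition Omega (m : nat) (k : nat) : int :=
  \sum_(j < k.+1) omega (k%:Z - (j * m)%:Z).

(* Let D_n(x) = prod_(1<=i<=n) (1 + x^i) and P_n(x) = prod_(1<=i<=n) (1 - x^i).  Since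
   (1 + x^i)(1 - x^i) = 1 - x^2i we have D_n(x) P_n(x) = P_n(x^2).  For N <= n the
   coefficient of x^N in D_n counts the partitions of N into distinct parts;
   dividing all parts by their gcd d is a bijection onto the gcd-one distinct
   partitions of N/d, so this count is sum_(m | N) q_psi(m).  By Euler's
   pentagonal number theorem, which follows from Shanks' finite identity, the
   coefficient of x^k in P_n is omega(k) for k <= n.  Comparing the coefficients
   of x^n in D_n P_n = P_n(x^2) and regrouping the left-hand side by the divisor m
   gives the theorem, because Omega_m(n - m) is the sum of omega(n - N) over the
   multiples 0 < N <= n of m. *)

From mathcomp Require Import all_boot all_order all_algebra.
From mathcomp Require Import ring zify.
Set Implicit Arguments. Unset Strict Implicit. Unset Printing Implicit Defensive.
Import Order.TTheory GRing.Theory Num.Theory.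

Lemma parts_gcd_dvd N (S : {set 'I_N.+1}) s : s \in S -> (parts_gcd S %| s)%N.
Proof. by move=> sS; rewrite /parts_gcd (bigD1 s) //= dvdn_gcdl. Qed.

Lemma parts_gcd_dvd_sum N (S : {set 'I_N.+1}) : is_distinct_partition S ->
  (parts_gcd S %| N)%N.
Proof.
case/andP=> _ /eqP {2}<-; apply: dvdn_sum => i; exact: parts_gcd_dvd.
Qed.

Lemma parts_gcd_gt0 N (S : {set 'I_N.+1}) : (0 < N)%N -> is_distinct_partition S ->
  (0 < parts_gcd S)%N.
Proof.
move=> N_gt0 /andP[S0 /eqP SN]; have [S_0 | [s sS]] := set_0Vmem S.
  by move: SN N_gt0; rewrite S_0 big_set0 => <-.
have s_gt0 : (0 < s)%N.
  by rewrite lt0n; apply: contraNneq S0 => s0; rewrite (_ : ord0 = s) //; apply: val_inj.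
by move: (parts_gcd_dvd sS); rewrite lt0n; apply: contraTneq => ->; rewrite dvd0n -lt0n.
Qed.

Section ScaleParts.
Variables (m d : nat).
Hypothesis d_gt0 : (0 < d)%N.

Definition scale_ord (t : 'I_m.+1) : 'I_(d * m).+1 := inord (d * t).

Lemma scale_ordE t : scale_ord t = (d * t)%N :> nat.
Proof. by rewrite inordK // ltnS leq_mul2l -ltnS ltn_ord orbT. Qed.

Lemma scale_ord_inj : injective scale_ord.
Proof.
by move=> t1 t2 /(congr1 val) /eqP; rewrite /= !scale_ordE eqn_pmul2l // => /eqP /val_inj.
Qed.

Definition scale_parts (T : {set 'I_m.+1}) := scale_ord @: T.

Lemma sum_scale_parts T :
  (\sum_(i in scale_parts T) (i : nat) = d * \sum_(t in T) (t : nat))%N.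
Proof.
rewrite big_imset /=; last by move=> ? ? _ _; apply: scale_ord_inj.
by rewrite big_distrr; apply: eq_bigr => t _; rewrite scale_ordE.
Qed.

Lemma parts_gcd_scale T : parts_gcd (scale_parts T) = (d * parts_gcd T)%N.
Proof.
rewrite /parts_gcd big_imset /=; last by move=> ? ? _ _; apply: scale_ord_inj.
rewrite (big_morph (muln d) (muln_gcdr d) (muln0 d)).
by apply: eq_bigr => t _; rewrite scale_ordE.
Qed.

Lemma ord0_scale_parts T : (ord0 \in scale_parts T) = (ord0 \in T).
Proof.
have scale_ord_eq0 t : (scale_ord t == ord0) = (t == ord0).
  by rewrite -!val_eqE /= scale_ordE muln_eq0 eqn0Ngt d_gt0.
apply/imsetP/idP => [[t tT /esym/eqP] | T0].
  by rewrite scale_ord_eq0 => /eqP <-.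
by exists ord0 => //; apply/esym/eqP; rewrite scale_ord_eq0.
Qed.

Lemma distinct_partition_scale T :
  is_distinct_partition (scale_parts T) = is_distinct_partition T.
Proof. by rewrite /is_distinct_partition ord0_scale_parts sum_scale_parts eqn_pmul2l. Qed.

Definition unscale_ord (s : 'I_(d * m).+1) : 'I_m.+1 := inord (s %/ d).

Lemma scale_parts_div (S : {set 'I_(d * m).+1}) : (d %| parts_gcd S)%N ->
  scale_parts (unscale_ord @: S) = S.
Proof.
move=> d_dvd; rewrite /scale_parts -imset_comp -[RHS]imset_id; apply: eq_in_imset => s sS /=.
have /dvdnP[t s_eq] := dvdn_trans d_dvd (parts_gcd_dvd sS).
have t_le : (t < m.+1)%N by rewrite ltnS -(leq_pmul2l d_gt0) mulnC -s_eq -ltnS.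
by apply: val_inj; rewrite /= scale_ordE /unscale_ord s_eq mulnK // inordK // mulnC.
Qed.

Lemma card_partitions_scaled_gcd :
  #|[set S : {set 'I_(d * m).+1} | is_distinct_partition S && (parts_gcd S == d)]| = q_psi m.
Proof.
rewrite /q_psi -(card_imset _ (imset_inj scale_ord_inj)); apply: eq_card => S.
rewrite inE; apply/idP/imsetP => [/andP[dpS /eqP gS] | [T]].
  have S_scaled : scale_parts (unscale_ord @: S) = S by rewrite scale_parts_div ?gS.
  exists (unscale_ord @: S) => //.
  rewrite inE -distinct_partition_scale -(eqn_pmul2l d_gt0) -parts_gcd_scale.
  by rewrite S_scaled dpS gS muln1 eqxx.
rewrite inE => /andP[dpT /eqP gT] ->.
by rewrite distinct_partition_scale parts_gcd_scale gT muln1 dpT eqxx.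
Qed.

End ScaleParts.

Lemma card_partitions_gcd N m : (0 < N)%N -> (0 < m)%N -> (m %| N)%N ->
  #|[set S : {set 'I_N.+1} | is_distinct_partition S && (parts_gcd S == N %/ m)]| = q_psi m.
Proof.
move=> N_gt0 m_gt0 /dvdnP[d N_eq]; subst N.
move: N_gt0; rewrite muln_gt0 mulnK // => /andP[d_gt0 _].
exact: card_partitions_scaled_gcd.
Qed.

Lemma card_distinct_partitions N n : (0 < N)%N -> (N <= n)%N ->
  #|[set S : {set 'I_N.+1} | is_distinct_partition S]| =
  (\sum_(m < n.+1 | (0 < m) && (m %| N)) q_psi m)%N.
Proof.
move=> N_gt0 le_Nn; pose cls (S : {set 'I_N.+1}) : 'I_n.+1 := inord (N %/ parts_gcd S).
have clsE S : is_distinct_partition S -> cls S = N %/ parts_gcd S :> nat.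
  by move=> dpS; rewrite inordK // ltnS (leq_trans (leq_div _ _)).
rewrite -sum1_card (partition_big cls (fun m : 'I_n.+1 => (0 < m) && (m %| N)%N)) /=.
  apply: eq_bigr => m /andP[m_gt0 m_dvd].
  rewrite -(card_partitions_gcd N_gt0 m_gt0 m_dvd) -sum1_card.
  apply: eq_bigl => S; rewrite !inE; apply: andb_id2l => dpS.
  have [g_gt0 g_dvd] := (parts_gcd_gt0 N_gt0 dpS, parts_gcd_dvd_sum dpS).
  by rewrite -val_eqE /= clsE // eqn_div // eq_sym eqn_div // mulnC.
move=> S; rewrite inE => dpS; rewrite clsE //.
have [g_gt0 g_dvd] := (parts_gcd_gt0 N_gt0 dpS, parts_gcd_dvd_sum dpS).
by rewrite divn_gt0 // dvdn_leq // dvdn_div.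
Qed.

Local Open Scope ring_scope.

Lemma double_bin2 k : (2 * 'C(k.+1, 2) = k.+1 * k)%N.
Proof. by elim: k => // k IH; rewrite binS bin1 mulnDr IH; lia. Qed.

Lemma pent_minusE d i : pent_minus d i.+1 = (d == i.+1 ^ 2 + 'C(i.+1, 2))%N.
Proof. by rewrite /pent_minus; have := double_bin2 i; move=> ?; apply/eqP/eqP; nia. Qed.

Lemma pent_plusE d i : pent_plus d i.+1 = (d == i.+1 ^ 2 + 'C(i.+2, 2))%N.
Proof. by rewrite /pent_plus; have := double_bin2 i.+1; move=> ?; apply/eqP/eqP; nia. Qed.

Lemma pent_leq d j : (0 < j)%N -> pent_plus d j || pent_minus d j -> (j <= d)%N.
Proof. by rewrite /pent_plus /pent_minus => j_gt0 /orP[] /eqP; nia. Qed.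

Lemma pent_uniq d i j : (0 < i)%N -> (0 < j)%N ->
  pent_plus d i || pent_minus d i -> pent_plus d j || pent_minus d j -> i = j.
Proof.
rewrite /pent_plus /pent_minus => i_gt0 j_gt0.
by case: (ltngtP i j) => // ij /orP[] /eqP Ei /orP[] /eqP Ej; nia.
Qed.

Lemma pent_plus_minus_excl d j : (0 < j)%N -> pent_plus d j -> pent_minus d j -> False.
Proof. by rewrite /pent_plus /pent_minus => j_gt0 /eqP Ep /eqP Em; nia. Qed.

Lemma omega_pent d j : (0 < j)%N -> pent_plus d j || pent_minus d j ->
  omega d%:Z = (-1) ^+ j.
Proof.
move=> j_gt0 pj; case: d pj (pent_leq j_gt0 pj) => [|d] pj le_jd.
  by move: j_gt0; rewrite leqn0 in le_jd; rewrite (eqP le_jd).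
have lt_jd : (j < d.+2)%N by [].
rewrite /omega ifT; last by apply/existsP; exists (Ordinal lt_jd); rewrite /= j_gt0 pj.
rewrite -signr_odd; case: ifP => [/existsP[i /andP[/andP[i_gt0 i_even] pi]] | /existsP no_even].
  by rewrite -(pent_uniq i_gt0 j_gt0 pi pj) (negbTE i_even).
case: (boolP (odd j)) => // j_even; case: no_even.
by exists (Ordinal lt_jd); rewrite /= j_gt0 j_even pj.
Qed.

Lemma omega_non_pent d : (0 < d)%N ->
  (forall j, (0 < j)%N -> ~~ (pent_plus d j || pent_minus d j)) -> omega d%:Z = 0.
Proof.
case: d => // d _ no_pent; rewrite /omega ifF //.
by apply/negbTE/existsP => -[j /andP[j_gt0 pj]]; move: (no_pent j j_gt0); rewrite pj.
Qed.

Definition pent_coef (d j : nat) : int :=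
  (-1) ^+ j * ((pent_minus d j)%:R + (pent_plus d j)%:R).

Lemma pent_coefE d j : (0 < j)%N ->
  pent_coef d j = if pent_plus d j || pent_minus d j then (-1) ^+ j else 0.
Proof.
rewrite /pent_coef => j_gt0.
case pp: (pent_plus d j); case pm: (pent_minus d j) => /=;
  rewrite ?addr0 ?add0r ?mulr1 ?mulr0 //.
by case: (pent_plus_minus_excl j_gt0 pp pm).
Qed.

Lemma omega_pent_sum d B : (0 < d)%N -> (d <= B)%N ->
  omega d%:Z = \sum_(j < B) pent_coef d j.+1.
Proof.
move=> d_gt0 le_dB.
case: (pickP (fun j : 'I_B => pent_plus d j.+1 || pent_minus d j.+1)) => [j pj | no_pent].
  rewrite (bigD1 j) // pent_coefE // pj (omega_pent _ pj) // big1 /= ?addr0 // => i ij.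
  rewrite pent_coefE // ifF //; apply: contraNF ij => pi.
  by apply/eqP/val_inj/eq_add_S/(pent_uniq _ _ pi pj).
rewrite big1 => [|i _]; last by rewrite pent_coefE // no_pent.
apply: omega_non_pent => // -[//|j] _; apply/negP => pj.
have lt_jB : (j < B)%N by rewrite (leq_trans (pent_leq _ pj)).
by move: (no_pent (Ordinal lt_jB)); rewrite /= pj.
Qed.

Section PolyIdentities.
Variable R : comNzRingType.

Definition euler_poly (k n : nat) : {poly R} := \prod_(k <= i < n) (1 - 'X^(i.+1)).

Definition shanks_term (n k : nat) : {poly R} :=
  (-1) ^+ k * euler_poly k n * 'X^(n * k + 'C(k.+1, 2)).

Definition pent_poly (n : nat) : {poly R} :=
  \sum_(j < n) (-1) ^+ j.+1 * ('X^(j.+1 ^ 2 + 'C(j.+1, 2)) + 'X^(j.+1 ^ 2 + 'C(j.+2, 2))).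

Lemma shanks_term_succ n k : (k <= n)%N ->
  shanks_term n.+1 k = shanks_term n k * 'X^k * (1 - 'X^(n.+1)).
Proof.
move=> le_kn; rewrite /shanks_term /euler_poly big_nat_recr //=.
have -> : (n.+1 * k + 'C(k.+1, 2) = (n * k + 'C(k.+1, 2)) + k)%N by rewrite mulSn; lia.
(* Generalizing the exponent keeps exprD from unfolding the binomial. *)
move: (n * k + 'C(k.+1, 2))%N => e; rewrite exprD; ring.
Qed.

Lemma shanks_term_shift n k : (k < n)%N ->
  shanks_term n k.+1 * ('X^(k.+1) - 1) = shanks_term n k * 'X^k * 'X^(n.+1).
Proof.
move=> lt_kn; rewrite /shanks_term /euler_poly [in RHS]big_ltn //.
have -> : (n * k.+1 + 'C(k.+2, 2) = (n * k + 'C(k.+1, 2)) + k + n.+1)%N.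
  by rewrite binS bin1 mulnS; lia.
move: (n * k + 'C(k.+1, 2))%N => e; rewrite !exprD [(-1) ^+ _.+1]exprS; ring.
Qed.

Lemma shanks_term_last n :
  shanks_term n.+1 n.+1 - shanks_term n n * 'X^n * 'X^(n.+1) =
  (-1) ^+ n.+1 * ('X^(n.+1 ^ 2 + 'C(n.+1, 2)) + 'X^(n.+1 ^ 2 + 'C(n.+2, 2))).
Proof.
rewrite /shanks_term /euler_poly !big_geq // !mulr1 -mulnn.
have -> : (n.+1 * n.+1 + 'C(n.+1, 2) = n * n + 'C(n.+1, 2) + n + n.+1)%N by lia.
move: (n * n + 'C(n.+1, 2))%N (n.+1 * n.+1 + 'C(n.+2, 2))%N => a b.
by rewrite !exprD [(-1) ^+ _.+1]exprS; ring.
Qed.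

Lemma shanks_identity n : \sum_(k < n.+1) shanks_term n k = 1 + pent_poly n.
Proof.
elim: n => [|n IH].
  by rewrite big_ord1 /pent_poly big_ord0 /shanks_term /euler_poly big_geq // !mulr1 addr0.
(* The u and w terms cancel telescopically: w 0 = 0 and w k.+1 = u k. *)
pose u k := shanks_term n k * 'X^k * 'X^(n.+1).
pose w k := shanks_term n k * ('X^k - 1).
have term_split (k : 'I_n.+1) : shanks_term n.+1 k = shanks_term n k - u k + w k.
  by rewrite (shanks_term_succ (ltn_ord k : (k <= n)%N)) /u /w; ring.
have sum_w : \sum_(k < n.+1) w k = \sum_(k < n) u k.
  rewrite big_ord_recl {1}/w expr0 subrr mulr0 add0r.
  by apply: eq_bigr => k _; rewrite /w shanks_term_shift.
rewrite big_ord_recr /= (eq_bigr _ (fun k _ => term_split k)) !big_split /= sumrN sum_w.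
rewrite [X in - X]big_ord_recr IH /pent_poly [in RHS]big_ord_recr /= -shanks_term_last /u.
ring.
Qed.

Lemma coef_sign_mul (p : {poly R}) k d : ((-1) ^+ k * p)`_d = (-1) ^+ k * p`_d.
Proof. by rewrite -(rmorph_sign (@polyC R)) coefCM. Qed.

Lemma coef_shanks_sum n d : (d <= n)%N ->
  (\sum_(k < n.+1) shanks_term n k)`_d = (euler_poly 0 n)`_d.
Proof.
move=> le_dn; rewrite big_ord_recl coefD coef_sum big1 ?addr0.
  by rewrite /shanks_term expr0 mul1r muln0 mulr1.
by move=> k _; rewrite lift0 /shanks_term coefMXn ifT // binS bin1 mulnS; lia.
Qed.

Definition distinct_poly (n : nat) : {poly R} := \prod_(i < n) (1 + 'X^(i.+1)).

Lemma coef_distinct_poly N :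
  (distinct_poly N)`_N = #|[set S : {set 'I_N.+1} | is_distinct_partition S]|%:R.
Proof.
pose F (i : 'I_N.+1) : {poly R} := if i == ord0 then 0 else 'X^i.
have -> : distinct_poly N = \prod_(i : 'I_N.+1) (F i + 1).
  rewrite big_ord_recl /F eqxx add0r mul1r; apply: eq_bigr => i _.
  by case: eqP => [/(congr1 val) //|_]; rewrite lift0 addrC.
rewrite bigA_distr coef_sum -sum1_card natr_sum [RHS]big_mkcond.
apply: eq_bigr => S _; rewrite inE /is_distinct_partition -big_mkcond /=.
case: (boolP (ord0 \in S)) => S0 /=.
  by rewrite (bigD1 ord0) //= /F eqxx mul0r coef0.
rewrite (eq_bigr (fun i : 'I_N.+1 => 'X^i)) => [|i iS]; last first.
  by rewrite /F; case: eqP => // i0; rewrite -i0 iS in S0.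
by rewrite prodrXr coefXn eq_sym; case: (_ == _).
Qed.

Lemma coef_distinct_poly_trunc N n : (N <= n)%N ->
  (distinct_poly n)`_N = (distinct_poly N)`_N.
Proof.
move=> /subnKC <-; elim: (n - N)%N => [|k IH]; first by rewrite addn0.
by rewrite addnS /distinct_poly big_ord_recr /= mulrDr mulr1 coefD coefMXn ltnS leq_addr addr0.
Qed.

Lemma distinct_euler_poly n : distinct_poly n * euler_poly 0 n = euler_poly 0 n \Po 'X^2.
Proof.
rewrite /distinct_poly /euler_poly big_mkord -big_split rmorph_prod; apply: eq_bigr => i _.
by rewrite /= comp_polyB comp_polyC comp_Xn_poly -exprM mulnC exprM; ring.
Qed.

End PolyIdentities.

Arguments euler_poly {R} k n.
Arguments shanks_term {R} n k.
Arguments pent_poly {R} n.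
Arguments distinct_poly {R} n.

Lemma coef_pent_poly n d : (pent_poly n)`_d = \sum_(j < n) pent_coef d j.+1.
Proof.
rewrite /pent_poly coef_sum; apply: eq_bigr => j _.
by rewrite coef_sign_mul coefD !coefXn -pent_minusE -pent_plusE.
Qed.

Lemma pent_coef0 j : (0 < j)%N -> pent_coef 0 j = 0.
Proof.
move=> j_gt0; rewrite pent_coefE // ifF //.
by apply/negP => /(pent_leq j_gt0); rewrite leqNgt j_gt0.
Qed.

Theorem pentagonal_number_theorem n d : (d <= n)%N -> (euler_poly 0 n)`_d = omega d%:Z.
Proof.
move=> le_dn; rewrite -coef_shanks_sum // shanks_identity coefD coef1 coef_pent_poly.
case: d le_dn => [|d] le_dn.
  by rewrite big1 ?addr0 // => j _; rewrite pent_coef0.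
by rewrite add0r (omega_pent_sum (B := n)).
Qed.

Lemma coef_distinct_euler n :
  (distinct_poly n * euler_poly 0 n)`_n = if odd n then 0 else omega (n./2)%:Z.
Proof.
rewrite distinct_euler_poly coef_comp_poly_Xn // dvdn2 -divn2.
by case: (odd n) => //; rewrite pentagonal_number_theorem // leq_div.
Qed.

Lemma omega_lt0 z : z < 0 -> omega z = 0.
Proof. by case: z. Qed.

Lemma sum_multiples (R : nmodType) (F : nat -> R) m K : (0 < m)%N ->
  \sum_(N < K.+1 | (0 < N)%N && (m %| N)%N) F N = \sum_(j < K %/ m) F (j.+1 * m)%N.
Proof.
move=> m_gt0; elim: K => [|K IH]; first by rewrite div0n big_ord0 big_mkcond big_ord1.
rewrite big_mkcond big_ord_recr -big_mkcond /= IH divnS //.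
have [dvd_m | _] := boolP (m %| K.+1)%N; last by rewrite addr0.
rewrite big_ord_recr /=.
have -> : ((K %/ m).+1 = K.+1 %/ m)%N by rewrite divnS // dvd_m.
by rewrite divnK.
Qed.

Lemma Omega_sum_multiples m n : (0 < m)%N -> (m <= n)%N ->
  Omega m (n - m) = \sum_(N < n.+1 | (0 < N)%N && (m %| N)%N) omega (n%:Z - N%:Z).
Proof.
move=> m_gt0 le_mn; rewrite (sum_multiples (fun N => omega (n%:Z - N%:Z))) //.
have le_div : (n %/ m <= (n - m).+1)%N by rewrite -ltnS ltn_divLR //; nia.
rewrite (big_ord_widen _ (fun j => omega (n%:Z - (j.+1 * m)%N%:Z)) le_div) big_mkcond.
apply: eq_bigr => j _; rewrite (_ : _ - _ = n%:Z - (j.+1 * m)%N%:Z); last first.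
  by rewrite -subzn // mulSn; lia.
case: ifP => // /negbT; rewrite -leqNgt -ltnS ltn_divLR // => lt_n.
by rewrite omega_lt0 // subr_lt0 ltz_nat.
Qed.

Lemma sum_qpsi_Omega n :
  \sum_(m < n.+1 | (0 < m)%N) (q_psi m)%:Z * Omega m (n - m) =
  \sum_(N < n.+1 | (0 < N)%N)
    #|[set S : {set 'I_N.+1} | is_distinct_partition S]|%:Z * omega (n%:Z - N%:Z).
Proof.
under eq_bigr => m m_gt0 do rewrite (Omega_sum_multiples m_gt0 (ltn_ord m : (m <= n)%N)) mulr_sumr.
rewrite (exchange_big_dep (fun N : 'I_n.+1 => 0 < N)%N) /=; last by move=> m N _ /andP[].
apply: eq_bigr => N N_gt0; rewrite (card_distinct_partitions N_gt0 (ltn_ord N)).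
rewrite (big_morph Posz PoszD (erefl 0%:Z)) mulr_suml.
by apply: eq_bigl => m; rewrite N_gt0.
Qed.

Lemma sum_partitions_omega n :
  \sum_(N < n.+1 | (0 < N)%N)
    #|[set S : {set 'I_N.+1} | is_distinct_partition S]|%:Z * omega (n%:Z - N%:Z) =
  (distinct_poly n * euler_poly 0 n)`_n - omega n%:Z.
Proof.
rewrite coefM [in RHS](bigD1 ord0) //= subn0 coef_distinct_poly_trunc //.
rewrite pentagonal_number_theorem // {1}/distinct_poly big_ord0 coef1 mul1r addrC addrK.
apply: eq_big => [N | N _]; first by rewrite lt0n -val_eqE.
have le_Nn : (N <= n)%N := ltn_ord N.
rewrite coef_distinct_poly_trunc // coef_distinct_poly natz.
by rewrite pentagonal_number_theorem ?leq_subr // subzn.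
Qed.

Theorem mainTheorem9 (n : nat) (hn : (1 <= n)%N) :
  \sum_(m < n.+1 | (1 <= m)%N) (q_psi m)%:Z * Omega m (n - m)%N =
  (if odd n then - omega n%:Z
   else - omega n%:Z + omega (n./2)%:Z).
Proof.
(* The identity also holds for n = 0. *)
rewrite sum_qpsi_Omega sum_partitions_omega coef_distinct_euler.
by case: (odd n); rewrite (add0r, addrC).
Qed.
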